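(* Let $\Psi\subseteq\mathcal{K}(X)$ be a compact (with respect to the Hausdorff metric) hyperspace invariant under all $\omega_k$ with $\mathcal{F}_1(X)\subseteq\Psi$. If $(X,\mathbb{F})$ has positive topological entropy, then $(\Psi,\overline{\mathbb{F}})$ has positive topological entropy.
   Context: $(X,d)$ compact metric, $\mathbb{F}=(f_n)$ continuous self-maps, $\omega_n=f_n\circ\cdots\circ f_1$. For an open cover $\mathcal{U}$ of a compact space, $H(\mathcal{U})=\log N_{\mathcal{U}}$, $N_{\mathcal{U}}$ the minimal cardinality of a subcover; $\mathcal{U}\vee\mathcal{V}=\{U\cap V\}$; $h_{\mathbb{F},\mathcal{U}}=\limsup_{k\to\infty}\frac1k H(\mathcal{U}\vee\omega_1^{-1}(\mathcal{U})\vee\cdots\vee\omega_{k-1}^{-1}(\mathcal{U}))$ and the topological entropy $h(\mathbb{F})=\sup_{\mathcal{U}}h_{\mathbb{F},\mathcal{U}}$. $\mathcal{F}_1(X)$: singletons; $\mathcal{K}(X)$: non-empty compact subsets with Hausdorff metric; induced system $\overline{\omega}_n(A)=\omega_n(A)$, its entropy defined in the same way. *)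

From Stdlib Require Import Reals Lra List ClassicalEpsilon.
Open Scope R_scope.

Definition is_metric {T : Type} (d : T -> T -> R) : Prop :=
  (forall x y, 0 <= d x y) /\
  (forall x y, d x y = 0 <-> x = y) /\
  (forall x y, d x y = d y x) /\
  (forall x y z, d x z <= d x y + d y z).

Definition open_set {T : Type} (d : T -> T -> R) (U : T -> Prop) : Prop :=
  forall x, U x -> exists r, 0 < r /\ forall y, d x y < r -> U y.

Definition open_cover {T : Type} (d : T -> T -> R) (C : (T -> Prop) -> Prop) : Prop :=
  (forall U, C U -> open_set d U) /\ (forall x, exists U, C U /\ U x).

Definition finite_subcover_of {T : Type} (C : (T -> Prop) -> Prop) (A : T -> Prop)
  (l : list (T -> Prop)) : Prop :=
  (forall U, In U l -> C U) /\ (forall x, A x -> exists U, In U l /\ U x).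

Definition compact_space {T : Type} (d : T -> T -> R) : Prop :=
  forall C, open_cover d C -> exists l, finite_subcover_of C (fun _ => True) l.

Definition compact_set {T : Type} (d : T -> T -> R) (A : T -> Prop) : Prop :=
  forall C, (forall U, C U -> open_set d U) ->
    (forall x, A x -> exists U, C U /\ U x) ->
    exists l, finite_subcover_of C A l.

Definition continuous {T S : Type} (dT : T -> T -> R) (dS : S -> S -> R) (g : T -> S) : Prop :=
  forall x eps, 0 < eps -> exists delta, 0 < delta /\
    forall y, dT x y < delta -> dS (g x) (g y) < eps.

Definition subcover_card {T : Type} (C : (T -> Prop) -> Prop) (n : nat) : Prop :=
  exists l, length l = n /\ finite_subcover_of C (fun _ => True) l.

Definition min_subcover_card {T : Type} (C : (T -> Prop) -> Prop) (n : nat) : Prop :=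
  subcover_card C n /\ forall m, subcover_card C m -> (n <= m)%nat.

Definition cover_number {T : Type} (C : (T -> Prop) -> Prop) : nat :=
  epsilon (inhabits 0%nat) (min_subcover_card C).

Definition cover_entropy {T : Type} (C : (T -> Prop) -> Prop) : R :=
  ln (INR (cover_number C)).

(** C v w_1^{-1}(C) v ... v w_{k-1}^{-1}(C), where w i = omega_i (w 0 = id). *)
Definition join_cover {T : Type} (w : nat -> T -> T) (C : (T -> Prop) -> Prop) (k : nat)
  : (T -> Prop) -> Prop :=
  fun V => exists g : nat -> (T -> Prop),
    (forall i, (i < k)%nat -> C (g i)) /\
    (forall x, V x <-> forall i, (i < k)%nat -> g i (w i x)).

(** limsup_{k -> oo} a k > 0 (limsup taken in [-oo, +oo]) *)
Definition limsup_pos (a : nat -> R) : Prop :=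
  exists eps, 0 < eps /\ forall K, exists k, (K <= k)%nat /\ eps < a k.

Definition cover_entropy_pos {T : Type} (w : nat -> T -> T) (C : (T -> Prop) -> Prop) : Prop :=
  limsup_pos (fun k => cover_entropy (join_cover w C k) / INR k).

(** h(F) = sup_C h_{F,C} > 0, i.e. some open cover C has h_{F,C} > 0 *)
Definition positive_entropy {T : Type} (d : T -> T -> R) (w : nat -> T -> T) : Prop :=
  exists C, open_cover d C /\ cover_entropy_pos w C.

(** * Non-autonomous system: f n is f_n (n >= 1; f 0 unused) *)
Fixpoint omega {X : Type} (f : nat -> X -> X) (n : nat) : X -> X :=
  match n with
  | O => fun x => x
  | S m => fun x => f (S m) (omega f m x)
  end.

Definition Rsup (E : R -> Prop) : R := epsilon (inhabits 0) (fun m => is_lub E m).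

(** d(x, B) = inf_{b in B} d(x,b) *)
Definition point_set_dist {X : Type} (d : X -> X -> R) (x : X) (B : X -> Prop) : R :=
  - Rsup (fun r => exists b, B b /\ r = - d x b).

Definition hausdorff {X : Type} (d : X -> X -> R) (A B : X -> Prop) : R :=
  Rmax (Rsup (fun r => exists a, A a /\ r = point_set_dist d a B))
       (Rsup (fun r => exists b, B b /\ r = point_set_dist d b A)).

Definition in_KX {X : Type} (d : X -> X -> R) (A : X -> Prop) : Prop :=
  (exists x, A x) /\ compact_set d A.

Definition image {X : Type} (g : X -> X) (A : X -> Prop) : X -> Prop :=
  fun y => exists x, A x /\ y = g x.

(* The hit sets <U> = {B | B meets U} of an open cover C of X form an open cover
   <C> of the hyperspace, and [B |-> w_i(B)] pulls <U> back to the hit set of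
   w_i^{-1}(U), so the joins of <C> are open covers too.  On singletons, which
   the induced system maps to singletons, <U> restricts to U; hence a finite
   subcover of the k-th join of <C> restricts to a subcover of the k-th join of C
   of the same size, and h(<C>) >= h(C) > 0.  Compactness of the hyperspace is
   what makes those finite subcovers exist; otherwise the cover numbers of the
   joins of <C> would be junk values. *)

From Pilot Require Import Defs.
From Stdlib Require Import Reals List ClassicalEpsilon Classical Wf_nat Lra Lia.
From Stdlib Require Import FunctionalExtensionality PropExtensionality ProofIrrelevance.
Open Scope R_scope.

Section MetricSpace.

Variables (T : Type) (d : T -> T -> R).
Hypothesis hd : is_metric d.

Lemma open_set_iff (V V' : T -> Prop) :
  (forall x, V x <-> V' x) -> Defs.open_set d V' -> Defs.open_set d V.
Proof.
  intros HV HV' x Vx.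
  destruct (HV' x (proj1 (HV x) Vx)) as [r [r_pos Hr]].
  exists r; split; [exact r_pos|]. intros y Hy. apply HV, Hr, Hy.
Qed.

Lemma open_set_preimage (g : T -> T) (U : T -> Prop) :
  continuous d d g -> Defs.open_set d U -> Defs.open_set d (fun x => U (g x)).
Proof.
  intros g_cont U_open x Ugx.
  destruct (U_open _ Ugx) as [r [r_pos Hr]].
  destruct (g_cont x r r_pos) as [delta [delta_pos Hdelta]].
  exists delta; split; [exact delta_pos|]. intros y Hy. apply Hr, Hdelta, Hy.
Qed.

Lemma open_set_finite_inter (k : nat) (V : nat -> T -> Prop) :
  (forall i, (i < k)%nat -> Defs.open_set d (V i)) ->
  Defs.open_set d (fun x => forall i, (i < k)%nat -> V i x).
Proof.
  induction k as [|k IH]; intros V_open x Vx.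
  - exists 1; split; [lra|]. intros y _ i Hi. lia.
  - destruct (IH (fun i Hi => V_open i (Nat.lt_lt_succ_r _ _ Hi)) x
                 (fun i Hi => Vx i (Nat.lt_lt_succ_r _ _ Hi))) as [r1 [r1_pos H1]].
    destruct (V_open k (Nat.lt_succ_diag_r k) x (Vx k (Nat.lt_succ_diag_r k)))
      as [r2 [r2_pos H2]].
    exists (Rmin r1 r2); split; [apply Rmin_pos; assumption|].
    intros y Hy i Hi.
    pose proof (Rmin_l r1 r2); pose proof (Rmin_r r1 r2).
    destruct (Nat.eq_dec i k) as [->|Hik].
    + apply H2. lra.
    + apply H1; [lra|lia].
Qed.

Lemma continuous_comp (g h : T -> T) :
  continuous d d g -> continuous d d h -> continuous d d (fun x => h (g x)).
Proof.
  intros g_cont h_cont x eps eps_pos.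
  destruct (h_cont (g x) eps eps_pos) as [r [r_pos Hr]].
  destruct (g_cont x r r_pos) as [delta [delta_pos Hdelta]].
  exists delta; split; [exact delta_pos|]. intros y Hy. apply Hr, Hdelta, Hy.
Qed.

Lemma compact_space_bounded :
  compact_space d -> exists M, forall x y, d x y <= M.
Proof.
  destruct hd as [_ [d_zero [d_sym d_tri]]]. intros T_compact.
  set (balls := fun U : T -> Prop => exists c, forall y, U y <-> d c y < 1).
  assert (balls_cover : open_cover d balls).
  { split.
    - intros U [c Hc] y Uy. apply Hc in Uy.
      exists (1 - d c y); split; [lra|].
      intros z Hz. apply Hc. pose proof (d_tri c y z). lra.
    - intros x. exists (fun y => d x y < 1); split.
      + exists x; tauto.
      + rewrite (proj2 (d_zero x x) eq_refl). lra. }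
  destruct (T_compact balls balls_cover) as [l [l_balls l_cover]].
  destruct (classic (exists x0 : T, True)) as [[x0 _]|T_empty];
    [|exists 0; intros x; exfalso; apply T_empty; exists x; exact I].
  assert (Hbound : exists M, forall y, (exists U, In U l /\ U y) -> d x0 y <= M).
  { clear l_cover. induction l as [|U l IH].
    - exists 0. intros y [U [[] _]].
    - destruct IH as [M HM]; [intros V HV; apply l_balls; right; exact HV|].
      destruct (l_balls U (or_introl eq_refl)) as [c Hc].
      exists (Rmax (d x0 c + 1) M). intros y [V [[<-|HV] Vy]].
      + apply Hc in Vy. pose proof (d_tri x0 c y). pose proof (Rmax_l (d x0 c + 1) M). lra.
      + pose proof (HM y (ex_intro _ V (conj HV Vy))). pose proof (Rmax_r (d x0 c + 1) M). lra. }
  destruct Hbound as [M HM]. exists (M + M). intros x y.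
  pose proof (HM x (l_cover x I)). pose proof (HM y (l_cover y I)).
  pose proof (d_tri x x0 y). rewrite (d_sym x x0) in *. lra.
Qed.

End MetricSpace.

Lemma continuous_omega {X : Type} (d : X -> X -> R) (f : nat -> X -> X) :
  (forall n, (1 <= n)%nat -> continuous d d (f n)) -> forall n, continuous d d (omega f n).
Proof.
  intros f_cont n. induction n as [|n IH].
  - intros x eps eps_pos. exists eps; split; [exact eps_pos|]. intros y Hy. exact Hy.
  - apply (continuous_comp _ d (omega f n)); [exact IH|]. apply f_cont. lia.
Qed.

Lemma Rsup_is_lub (E : R -> Prop) :
  (exists x, E x) -> (exists M, forall x, E x -> x <= M) -> is_lub E (Rsup E).
Proof.
  intros E_ne [M HM]. unfold Rsup. apply epsilon_spec.
  destruct (completeness E) as [m Hm]; [exists M; exact HM | exact E_ne |].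
  exists m; exact Hm.
Qed.

Section HausdorffDistance.

Variables (X : Type) (d : X -> X -> R).
Hypothesis hd : is_metric d.

Let d_nonneg : forall x y, 0 <= d x y := proj1 hd.

Lemma point_set_dist_is_lub (a : X) (B : X -> Prop) :
  (exists b, B b) ->
  is_lub (fun r => exists b, B b /\ r = - d a b) (- point_set_dist d a B).
Proof.
  intros [b Bb]. unfold point_set_dist. rewrite Ropp_involutive.
  apply Rsup_is_lub; [exists (- d a b), b; split; auto|].
  exists 0. intros r [b' [_ ->]]. pose proof (d_nonneg a b'). lra.
Qed.

Lemma point_set_dist_le (a b : X) (B : X -> Prop) :
  B b -> point_set_dist d a B <= d a b.
Proof.
  intros Bb.
  destruct (point_set_dist_is_lub a B (ex_intro _ b Bb)) as [Hub _].
  assert (- d a b <= - point_set_dist d a B) by (apply Hub; exists b; auto). lra.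
Qed.

Lemma point_set_dist_lt (a : X) (B : X -> Prop) (r : R) :
  (exists b, B b) -> point_set_dist d a B < r -> exists b, B b /\ d a b < r.
Proof.
  intros B_ne Hlt. apply NNPP. intros Hfar.
  destruct (point_set_dist_is_lub a B B_ne) as [_ Hleast].
  assert (- point_set_dist d a B <= - r); [|lra].
  apply Hleast. intros s [b [Bb ->]].
  destruct (Rlt_le_dec (d a b) r) as [Hab|Hab]; [exfalso; eauto | lra].
Qed.

Lemma point_set_dist_le_hausdorff (M : R) (A B : X -> Prop) (a : X) :
  (forall x y, d x y <= M) -> (exists b, B b) -> A a ->
  point_set_dist d a B <= hausdorff d A B.
Proof.
  intros HM [b Bb] Aa. unfold hausdorff. eapply Rle_trans; [|apply Rmax_l].
  assert (Hlub : is_lub (fun r => exists a', A a' /\ r = point_set_dist d a' B)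
                   (Rsup (fun r => exists a', A a' /\ r = point_set_dist d a' B))).
  { apply Rsup_is_lub; [eauto|]. exists M. intros r [a' [_ ->]].
    eapply Rle_trans; [apply (point_set_dist_le a' b B Bb) | apply HM]. }
  apply (proj1 Hlub). exists a; auto.
Qed.

End HausdorffDistance.

Lemma cover_number_min {T : Type} (C : (T -> Prop) -> Prop) :
  (exists n, subcover_card C n) -> min_subcover_card C (cover_number C).
Proof.
  intros Hfin. unfold cover_number. apply epsilon_spec.
  destruct (dec_inh_nat_subset_has_unique_least_element _
              (fun n => classic (subcover_card C n)) Hfin) as [n [Hn _]].
  exists n. exact Hn.
Qed.

Lemma cover_number_le {T : Type} (C : (T -> Prop) -> Prop) (n : nat) :
  subcover_card C n -> (cover_number C <= n)%nat.
Proof. intros Hn. apply (proj2 (cover_number_min C (ex_intro _ n Hn))), Hn. Qed.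

Lemma ln_le (x y : R) : 0 < x -> x <= y -> ln x <= ln y.
Proof.
  intros x_pos [Hxy|<-]; [left; apply ln_increasing; assumption | right; reflexivity].
Qed.

Lemma ln_INR_le (m n : nat) : (m <= n)%nat -> ln (INR m) <= ln (INR n).
Proof.
  intros Hmn. destruct m as [|m].
  - destruct n as [|n]; [right; reflexivity|].
    (* [ln 0 = 0] is a junk value, which is still [<= ln 1]. *)
    replace (ln (INR 0)) with (ln 1).
    2:{ rewrite ln_1. unfold ln. case Rlt_dec; intros H;
        [destruct (Rlt_irrefl _ H) | reflexivity]. }
    apply ln_le; [lra|]. apply (le_INR 1). lia.
  - apply ln_le; [apply lt_0_INR; lia | apply le_INR, Hmn].
Qed.

Lemma cover_entropy_pos_le {T S : Type} (w : nat -> T -> T) (w' : nat -> S -> S)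
    (C : (T -> Prop) -> Prop) (D : (S -> Prop) -> Prop) :
  (forall k, (cover_number (join_cover w C k) <= cover_number (join_cover w' D k))%nat) ->
  cover_entropy_pos w C -> cover_entropy_pos w' D.
Proof.
  intros Hle [eps [eps_pos Hfreq]]. exists eps; split; [exact eps_pos|].
  intros K. destruct (Hfreq K) as [k [Hk Hlt]]. exists k; split; [exact Hk|].
  eapply Rlt_le_trans; [exact Hlt|]. apply Rmult_le_compat_r.
  - destruct k as [|k]; [simpl; rewrite Rinv_0; right; reflexivity|].
    left. apply Rinv_0_lt_compat, lt_0_INR. lia.
  - apply ln_INR_le, Hle.
Qed.

(* Restricting a finite subcover of the join of D along [e] gives one of the
   join of C, of at most the same size. *)
Lemma cover_number_join_restrict {X Y : Type} (e : X -> Y)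
    (w : nat -> X -> X) (w' : nat -> Y -> Y)
    (C : (X -> Prop) -> Prop) (D : (Y -> Prop) -> Prop) (k : nat) :
  (forall i x, w' i (e x) = e (w i x)) ->
  (forall V, D V -> exists U, C U /\ forall x, U x <-> V (e x)) ->
  (exists n, subcover_card (join_cover w' D k) n) ->
  (cover_number (join_cover w C k) <= cover_number (join_cover w' D k))%nat.
Proof.
  intros He HCD Hfin.
  destruct (cover_number_min _ Hfin) as [[l [Hlen [l_join l_cover]]] _].
  apply cover_number_le. rewrite <- Hlen.
  exists (map (fun V x => V (e x)) l). split; [apply length_map|]. split.
  - intros U HU. apply in_map_iff in HU. destruct HU as [V [<- Vl]].
    destruct (l_join V Vl) as [g [Dg HV]].
    destruct (choice (fun i U => (i < k)%nat -> C U /\ forall x, U x <-> g i (e x)))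
      as [u Hu].
    { intros i. destruct (Nat.lt_ge_cases i k) as [Hi|Hi].
      - destruct (HCD _ (Dg i Hi)) as [U HU]. exists U. intros _. exact HU.
      - exists (fun _ => True). intros Hi'. lia. }
    exists u. split; [intros i Hi; apply (Hu i Hi)|].
    intros x. rewrite HV. split; intros Hx i Hi.
    + apply (Hu i Hi). rewrite <- He. apply Hx, Hi.
    + rewrite He. apply (Hu i Hi), Hx, Hi.
  - intros x _. destruct (l_cover (e x) I) as [V [Vl Vx]].
    exists (fun x => V (e x)). split; [apply (in_map (fun V x => V (e x))), Vl | exact Vx].
Qed.

Section Hyperspace.

Variables (X : Type) (d : X -> X -> R) (Psi : (X -> Prop) -> Prop).
Hypothesis hd : is_metric d.

Definition hausdorff_sig (A B : {A | Psi A}) : R := hausdorff d (proj1_sig A) (proj1_sig B).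

Definition hits (U : X -> Prop) (B : {A | Psi A}) : Prop := exists y, proj1_sig B y /\ U y.

Definition hit_cover (C : (X -> Prop) -> Prop) (V : {A | Psi A} -> Prop) : Prop :=
  exists U, C U /\ V = hits U.

Lemma open_set_hits (M : R) (U : X -> Prop) :
  (forall x y, d x y <= M) -> (forall A, Psi A -> exists x, A x) ->
  Defs.open_set d U -> Defs.open_set hausdorff_sig (hits U).
Proof.
  intros HM Psi_ne U_open B [y [By Uy]].
  destruct (U_open y Uy) as [r [r_pos Hr]].
  exists r; split; [exact r_pos|]. intros B' HBB'.
  pose proof (Psi_ne _ (proj2_sig B')) as B'_ne.
  pose proof (point_set_dist_le_hausdorff X d hd M _ _ y HM B'_ne By).
  destruct (point_set_dist_lt X d hd y (proj1_sig B') r B'_ne) as [z [B'z Hyz]];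
    [unfold hausdorff_sig in HBB'; lra|].
  exists z. split; [exact B'z | apply Hr, Hyz].
Qed.

Lemma open_cover_hit_cover (M : R) (C : (X -> Prop) -> Prop) :
  (forall x y, d x y <= M) -> (forall A, Psi A -> exists x, A x) ->
  open_cover d C -> open_cover hausdorff_sig (hit_cover C).
Proof.
  intros HM Psi_ne [C_open C_cover]. split.
  - intros V [U [CU ->]]. apply (open_set_hits M); auto.
  - intros B. destruct (Psi_ne _ (proj2_sig B)) as [a Ba].
    destruct (C_cover a) as [U [CU Ua]].
    exists (hits U). split; [exists U; auto | exists a; auto].
Qed.

Variables (g : nat -> X -> X) (F : nat -> {A | Psi A} -> {A | Psi A}).
Hypothesis F_image : forall i B, proj1_sig (F i B) = image (g i) (proj1_sig B).

Lemma hits_image (U : X -> Prop) (i : nat) (B : {A | Psi A}) :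
  hits U (F i B) <-> hits (fun y => U (g i y)) B.
Proof.
  unfold hits. rewrite F_image. split.
  - intros [y [[x [Bx ->]] Uy]]. exists x; split; assumption.
  - intros [x [Bx Ux]]. exists (g i x). split; [exists x; split; auto | exact Ux].
Qed.

Lemma open_cover_join_hit_cover (M : R) (C : (X -> Prop) -> Prop) (k : nat) :
  (forall x y, d x y <= M) -> (forall A, Psi A -> exists x, A x) ->
  (forall i, continuous d d (g i)) -> open_cover d C ->
  open_cover hausdorff_sig (join_cover F (hit_cover C) k).
Proof.
  intros HM Psi_ne g_cont [C_open C_cover]. split.
  - intros V [h [Hh HV]].
    apply (open_set_iff _ _ V (fun B => forall i, (i < k)%nat -> h i (F i B)) HV).
    apply open_set_finite_inter. intros i Hi.
    destruct (Hh i Hi) as [U [CU ->]].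
    apply (open_set_iff _ _ _ (hits (fun y => U (g i y))) (hits_image U i)).
    apply (open_set_hits M); [exact HM | exact Psi_ne |].
    apply open_set_preimage; [apply g_cont | apply C_open, CU].
  - intros B. destruct (Psi_ne _ (proj2_sig B)) as [a Ba].
    destruct (choice (fun i U => C U /\ U (g i a)) (fun i => C_cover (g i a))) as [u Hu].
    exists (fun B' => forall i, (i < k)%nat -> hits (u i) (F i B')). split.
    + exists (fun i => hits (u i)). split; [|tauto].
      intros i _. exists (u i). split; [apply Hu | reflexivity].
    + intros i _. apply hits_image. exists a. split; [exact Ba | apply Hu].
Qed.

Hypothesis hsing : forall x, Psi (fun y => y = x).

Definition singleton_sig (x : X) : {A | Psi A} := exist Psi (fun y => y = x) (hsing x).

Lemma hits_singleton (U : X -> Prop) (x : X) : hits U (singleton_sig x) <-> U x.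
Proof.
  unfold hits; simpl. split; [intros [y [-> Uy]]; exact Uy | intros Ux; exists x; auto].
Qed.

Lemma induced_map_singleton (i : nat) (x : X) : F i (singleton_sig x) = singleton_sig (g i x).
Proof.
  apply (eq_sig_hprop (fun A => proof_irrelevance (Psi A))).
  rewrite F_image. simpl. apply functional_extensionality. intros y.
  apply propositional_extensionality. split.
  - intros [x' [-> ->]]. reflexivity.
  - intros ->. exists x; auto.
Qed.

End Hyperspace.

Theorem mainTheorem16 (X : Type) (d : X -> X -> R) (f : nat -> X -> X)
  (Psi : (X -> Prop) -> Prop)
  (hd : is_metric d) (hX : compact_space d)
  (hf : forall n, (1 <= n)%nat -> continuous d d (f n))
  (hPsiK : forall A, Psi A -> in_KX d A)
  (hsing : forall x : X, Psi (fun y => y = x))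
  (hinv : forall k A, Psi A -> Psi (image (omega f k) A))
  (hcomp : compact_space
             (fun A B : {A : X -> Prop | Psi A} => hausdorff d (proj1_sig A) (proj1_sig B))) :
  positive_entropy d (omega f) ->
  positive_entropy
    (fun A B : {A : X -> Prop | Psi A} => hausdorff d (proj1_sig A) (proj1_sig B))
    (fun k (A : {A : X -> Prop | Psi A}) =>
       exist Psi (image (omega f k) (proj1_sig A)) (hinv k (proj1_sig A) (proj2_sig A))).
Proof.
  intros [C [C_cover C_pos]].
  destruct (compact_space_bounded X d hd hX) as [M HM].
  assert (Psi_ne : forall A, Psi A -> exists x, A x) by (intros A HA; apply (hPsiK A HA)).
  pose proof (continuous_omega d f hf) as omega_cont.
  set (W := fun k (A : {A : X -> Prop | Psi A}) =>
       exist Psi (image (omega f k) (proj1_sig A)) (hinv k (proj1_sig A) (proj2_sig A))).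
  assert (W_image : forall i B, proj1_sig (W i B) = image (omega f i) (proj1_sig B))
    by reflexivity.
  exists (hit_cover X Psi C). split.
  { exact (open_cover_hit_cover _ _ _ hd M C HM Psi_ne C_cover). }
  apply (cover_entropy_pos_le (omega f) W C); [|exact C_pos].
  intros k. apply (cover_number_join_restrict (singleton_sig X Psi hsing)).
  - intros i x. apply (induced_map_singleton _ _ _ _ W_image).
  - intros V [U [CU ->]]. exists U. split; [exact CU|].
    intros x. symmetry. apply hits_singleton.
  - destruct (hcomp (join_cover W (hit_cover X Psi C) k)) as [l Hl].
    + exact (open_cover_join_hit_cover _ _ _ hd _ _ W_image M C k HM Psi_ne omega_cont C_cover).
    + exists (length l), l. auto.
Qed.
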